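(* Let $q=p^f$ be a prime power, $N>1$ an integer with $N\mid(q-1)$, $\gamma$ a primitive element of $\mathbb{F}_q$, and $C_0=\langle\gamma^N\rangle$. Assume the Gauss periods $\eta_a=\sum_{x\in\gamma^aC_0}\psi(x)$, $0\le a\le N-1$, take exactly $\ell$ distinct values $\alpha_1,\dots,\alpha_\ell$, and let $I_i=\{a\in\mathbb{Z}_N:\eta_a=\alpha_i\}$ for $1\le i\le\ell$. Then each $I_i$ is invariant under multiplication by $p$ in $\mathbb{Z}_N$. Moreover, if $m:=\gcd\{\mathrm{ord}_n(p): n>1,\ n\mid N\}\ge 2$, then there is a unique $i_0\in\{1,\dots,\ell\}$ such that $|I_{i_0}|\equiv1\pmod m$ and $|I_i|\equiv 0\pmod m$ for all $i\ne i_0$.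
   Context: $\psi$ is the canonical additive character of $\mathbb{F}_q$: $\psi(x)=\xi_p^{\mathrm{Tr}_{q/p}(x)}$. $\mathrm{ord}_n(p)$ is the multiplicative order of $p$ modulo $n$. *)

From mathcomp Require Import all_boot all_order all_algebra all_field.
Set Implicit Arguments. Unset Strict Implicit. Unset Printing Implicit Defensive.
Import GRing.Theory Num.Theory.
Local Open Scope ring_scope.

Definition trace (F : finFieldType) (p f : nat) (x : F) : F :=
  \sum_(i < f) x ^+ (p ^ i).

(* The element of {0,...,p-1} whose image in F equals Tr(x)
   (Tr(x) lies in the prime field F_p). *)
Definition tr_nat (F : finFieldType) (p f : nat) (x : F) : nat :=
  if [pick k : 'I_p | (k%:R : F) == trace p f x] is Some k then val k else 0%N.

(* Canonical additive character psi(x) = xi_p ^ Tr(x), xi_p a primitive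
   p-th root of unity in the (algebraic) complex numbers. *)
Definition psi (F : finFieldType) (p f : nat) (xi : algC) (x : F) : algC :=
  xi ^+ tr_nat p f x.

Definition C0 (F : finFieldType) (N : nat) (g : F) : {set F} :=
  [set (g ^+ N) ^+ j | j : 'I_#|F|].

Definition cclass (F : finFieldType) (N : nat) (g : F) (a : nat) : {set F} :=
  [set g ^+ a * x | x in C0 N g].

Definition gauss_period (F : finFieldType) (p f : nat) (xi : algC)
    (N : nat) (g : F) (a : nat) : algC :=
  \sum_(x in cclass N g a) psi p f xi x.

(* ord_n(p): least k >= 1 with p^k = 1 (mod n) (searched among 1..n, which
   suffices when p is coprime to n). *)
Definition ord_mod (n p : nat) : nat :=
  (find (fun k => p ^ k.+1 == 1 %[mod n]) (iota 0 n)).+1.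

Definition m_gcd (N p : nat) : nat :=
  \big[gcdn/0%N]_(n < N.+1 | (1 < n)%N && (n %| N)%N) ord_mod n p.

From mathcomp Require Import all_boot all_order all_algebra all_field.
Import GRing.Theory Num.Theory.
Set Implicit Arguments. Unset Strict Implicit.

(* The Frobenius map x |-> x^p fixes the absolute trace, hence psi, and maps
   the cyclotomic class gamma^a C_0 onto gamma^(pa) C_0; so eta_(pa) = eta_a
   and every I_i is a union of orbits of a |-> pa on Z_N.  The orbit {0} is a
   singleton; for a <> 0 the orbit length k satisfies p^k = 1 mod n with
   n = N / gcd(a, N) > 1, so ord_n(p), and hence m, divides k.  Counting orbits
   gives |I_i| = [0 \in I_i] mod m. *)

Section OrbitCounting.
Variables (T : finType) (f : T -> T) (m : nat).
Hypothesis injf : injective f.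

Lemma dvdn_card_fclosed (S : {set T}) :
  (forall x, (f x \in S) = (x \in S)) ->
  {in S, forall x, m %| order f x} -> m %| #|S|.
Proof.
have [n] := ubnP #|S|; elim: n S => // n IH S ltSn clS dvS.
have [->|[x xS]] := set_0Vmem S; first by rewrite cards0 dvdn0.
set O := [set y | fconnect f x y].
have clS' : fclosed f S by move=> u v /eqP <-; rewrite clS.
have OS : O \subset S.
  by apply/subsetP => y; rewrite inE => /(closed_connect clS') <-.
have cardO : #|O| = order f x by apply: eq_card => y; rewrite inE.
have eS := cardsID O S; rewrite (setIidPr OS) in eS.
rewrite -eS dvdn_add ?cardO ?dvS //; apply: IH.
- rewrite -ltnS (leq_trans _ ltSn) // -eS ltnS -add1n leq_add2r card_gt0.
  by apply/set0Pn; exists x; rewrite inE connect0.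
- by move=> y; rewrite !in_setD clS !inE -same_fconnect1_r.
- by move=> y /setDP[/dvS].
Qed.

Lemma card_fclosed_mod (S : {set T}) (z : T) :
  f z = z -> (forall x, (f x \in S) = (x \in S)) ->
  (forall x, x != z -> m %| order f x) -> #|S| = (z \in S) %[mod m].
Proof.
move=> fz clS dvm; rewrite (cardsD1 z) -modnDmr.
suff /eqP -> : #|S :\ z| %% m == 0 by rewrite addn0.
apply: dvdn_card_fclosed => [x|x /setD1P[/dvm //]].
by rewrite !in_setD1 clS -{1}fz (inj_eq injf).
Qed.

End OrbitCounting.

Lemma eqn_modMl p m n d :
  coprime p d -> (p * m == p * n %[mod d]) = (m == n %[mod d]).
Proof.
move=> co_pd; wlog le_nm : m n / n <= m.
  move=> H; have [|/ltnW le_mn] := leqP n m; first exact: H.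
  by rewrite eq_sym H // eq_sym.
rewrite !eqn_mod_dvd ?leq_mul //.
by rewrite -mulnBr Gauss_dvdr // coprime_sym.
Qed.

Section MulMod.
Variables (N p : nat) (N_gt0 : 0 < N).

Definition mulmod (a : 'I_N) : 'I_N := Ordinal (ltn_pmod (p * a) N_gt0).

Lemma val_iter_mulmod k a : val (iter k mulmod a) = p ^ k * a %% N.
Proof.
elim: k => [|k IH] /=; first by rewrite mul1n modn_small.
by rewrite IH modnMmr mulnA -expnS.
Qed.

Hypothesis co_pN : coprime p N.

Lemma mulmod_inj : injective mulmod.
Proof.
move=> a b /(congr1 val) /= /eqP; rewrite eqn_modMl // !modn_small //.
by move/eqP/val_inj.
Qed.

Lemma expn_order_mulmod a : p ^ order mulmod a * a = a %[mod N].
Proof.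
by rewrite -val_iter_mulmod iter_order ?modn_small //; apply: mulmod_inj.
Qed.

End MulMod.

Section MultiplicativeOrder.
Variables (n p : nat).
Hypotheses (n_gt1 : 1 < n) (co_pn : coprime p n).

Lemma exists_expn_eq1 : exists2 k, 0 < k <= n & p ^ k = 1 %[mod n].
Proof.
have n_gt0 : 0 < n by apply: ltnW.
pose one := Ordinal n_gt1; exists (order (mulmod p n_gt0) one).
  by rewrite order_gt0 /=; apply: leq_trans (max_card _) _; rewrite card_ord.
by have := expn_order_mulmod n_gt0 co_pn one; rewrite /= muln1.
Qed.

Let P k := p ^ k.+1 == 1 %[mod n].

Lemma has_expn_eq1 : has P (iota 0 n).
Proof.
have [k /andP[k_gt0 le_kn] pk1] := exists_expn_eq1.
apply/hasP; exists k.-1; first by rewrite mem_iota add0n prednK.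
by rewrite /P prednK // pk1.
Qed.

Lemma expn_ord_mod : p ^ ord_mod n p = 1 %[mod n].
Proof.
have := nth_find 0 has_expn_eq1.
rewrite /ord_mod -/P nth_iota; first by move/eqP.
by rewrite -[X in _ < X](size_iota 0 n) -has_find has_expn_eq1.
Qed.

Lemma ord_mod_min k : 0 < k < ord_mod n p -> p ^ k != 1 %[mod n].
Proof.
rewrite /ord_mod -/P => /andP[k_gt0 lt_k].
have lt_k' : k.-1 < find P (iota 0 n) by rewrite -ltnS prednK.
have := before_find 0 lt_k'; rewrite nth_iota /P ?prednK // => [-> //|].
rewrite -ltnS (leq_trans lt_k) // ltnS.
by rewrite -[X in _ <= X](size_iota 0 n) find_size.
Qed.

Lemma ord_mod_dvd s : p ^ s = 1 %[mod n] -> ord_mod n p %| s.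
Proof.
move=> ps1; have pr1 : p ^ (s %% ord_mod n p) = 1 %[mod n].
  rewrite -ps1 {2}(divn_eq s (ord_mod n p)) expnD (mulnC (s %/ _)) expnM.
  rewrite -[RHS]modnMml -[in RHS]modnXm expn_ord_mod.
  by rewrite modnXm exp1n modnMml mul1n.
apply: contraT; rewrite /dvdn -lt0n => r_gt0.
have := @ord_mod_min (s %% ord_mod n p).
by rewrite r_gt0 ltn_mod pr1 eqxx; apply.
Qed.

End MultiplicativeOrder.

Lemma m_gcd_dvd_ord_mod N p n :
  0 < N -> 1 < n -> n %| N -> m_gcd N p %| ord_mod n p.
Proof.
move=> N_gt0 n_gt1 dvd_nN; have lt_nN : n < N.+1 by rewrite ltnS dvdn_leq.
by apply: (biggcdn_inf (Ordinal lt_nN)); rewrite //= n_gt1.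
Qed.

Lemma dvdn_divgcd_mulr k x N : 0 < N -> N %| k * x -> N %/ gcdn x N %| k.
Proof.
move=> N_gt0 dvd_N_kx; rewrite dvdn_divLR ?gcdn_gt0 ?N_gt0 ?orbT ?dvdn_gcdr //.
by rewrite muln_gcdr dvdn_gcd dvd_N_kx dvdn_mull.
Qed.

Lemma m_gcd_dvd_order_mulmod N p (N_gt0 : 0 < N) (x : 'I_N) :
  coprime p N -> 0 < x -> m_gcd N p %| order (mulmod p N_gt0) x.
Proof.
move=> co_pN x_gt0; set o := order _ x; set n := N %/ gcdn x N.
have p_gt0 : 0 < p.
  case: p co_pN {o} => // /eqP; rewrite gcd0n => N1.
  by have := leq_ltn_trans x_gt0 (ltn_ord x); rewrite N1.
have n_gt1 : 1 < n.
  rewrite ltn_divRL ?dvdn_gcdr // mul1n (leq_ltn_trans _ (ltn_ord x)) //.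
  by rewrite dvdn_leq ?dvdn_gcdl.
have dvd_nN : n %| N by apply: dvdn_div; apply: dvdn_gcdr.
have dvd_n_po1 : n %| p ^ o - 1.
  apply: (dvdn_divgcd_mulr N_gt0).
  rewrite mulnBl mul1n -eqn_mod_dvd ?leq_pmull ?expn_gt0 ?p_gt0 //.
  exact/eqP/expn_order_mulmod.
apply: (dvdn_trans (m_gcd_dvd_ord_mod p N_gt0 n_gt1 dvd_nN)).
apply: ord_mod_dvd => //; first exact: coprime_dvdr dvd_nN co_pN.
by apply/eqP; rewrite eqn_mod_dvd ?expn_gt0 ?p_gt0.
Qed.

Lemma coprime_pred_card (F : finFieldType) p f :
  #|F| = p ^ f -> coprime p #|F|.-1.
Proof.
move=> hF; have F_gt1 := card_finNzRing_gt1 F.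
have f_gt0 : 0 < f by case: f hF => // hF; rewrite hF in F_gt1.
by rewrite -(coprime_pexpl _ _ f_gt0) -hF -{1}(ltn_predK F_gt1) coprimeSn.
Qed.

Local Open Scope ring_scope.

Section GaussPeriods.
Variables (F : finFieldType) (p f : nat) (xi : algC).
Hypotheses (chF : p \in [pchar F]) (hF : #|F| = (p ^ f)%N).

Lemma trace_frob (x : F) : trace p f (x ^+ p) = trace p f x.
Proof.
rewrite /trace; apply: (@addrI _ x).
transitivity (\sum_(i < f.+1) x ^+ (p ^ i)).
  rewrite big_ord_recl expn0 expr1; congr (_ + _).
  by apply: eq_bigr => i _; rewrite expnS exprM.
by rewrite big_ord_recr /= -hF expf_card addrC.
Qed.

Lemma psi_frob (x : F) : psi p f xi (x ^+ p) = psi p f xi x.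
Proof. by rewrite /psi /tr_nat trace_frob. Qed.

Variables (N : nat) (g : F).
Hypotheses (N_gt0 : (0 < N)%N) (dvd_N_q1 : (N %| #|F|.-1)%N).
Hypothesis g_prim : (#|F|.-1).-primitive_root g.

Lemma cclassP a y :
  reflect (exists2 e, y = g ^+ e & e = a %[mod N])%N (y \in cclass N g a).
Proof.
apply: (iffP imsetP) => [[_ /imsetP[j _ ->] ->]|[e -> eq_ea]].
  by exists (a + N * j)%N; rewrite ?exprD ?exprM // addnC mulnC modnMDl.
pose q1 := #|F|.-1; have q1_gt0 : (0 < q1)%N := prim_order_gt0 g_prim.
have gq1 : g ^+ q1 = 1 := prim_expr_order g_prim.
have le_a_e' : (a <= e + q1 * a)%N :=
  leq_trans (leq_pmull a q1_gt0) (leq_addl _ _).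
have dvd_N : (N %| e + q1 * a - a)%N.
  rewrite -eqn_mod_dvd // -modnDmr -modnMml (eqP dvd_N_q1).
  by rewrite mul0n mod0n addn0 eq_ea.
pose j := ((e + q1 * a - a) %/ N)%N.
have gNq1 : (g ^+ N) ^+ q1 = 1 by rewrite exprAC gq1 expr1n.
exists ((g ^+ N) ^+ (j %% q1)).
  apply/imsetP.
  by exists (Ordinal (leq_trans (ltn_pmod j q1_gt0) (leq_pred _))).
rewrite expr_mod // -exprM -exprD mulnC divnK // subnKC //.
by rewrite exprD exprM gq1 expr1n mulr1.
Qed.

Lemma cclass_modn a : cclass N g (a %% N) = cclass N g a.
Proof.
by apply/setP => y; apply/cclassP/cclassP => -[e -> eq_ea];
  exists e; rewrite // eq_ea modn_mod.
Qed.

Lemma card_cclass a : #|cclass N g a| = #|C0 N g|.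
Proof.
apply: card_imset; apply/mulfI; rewrite expf_eq0 negb_and.
by rewrite (prim_root_eq0 g_prim) -lt0n (prim_order_gt0 g_prim) orbT.
Qed.

Lemma frob_inj : injective (fun x : F => x ^+ p).
Proof. by move=> x y; rewrite -!(pFrobenius_autE chF); apply: fmorph_inj. Qed.

Lemma cclass_frob a : cclass N g (p * a) = [set x ^+ p | x in cclass N g a].
Proof.
apply/esym/eqP; rewrite eqEcard (card_imset _ frob_inj).
rewrite !card_cclass leqnn andbT.
apply/subsetP => _ /imsetP[_ /cclassP[e -> eq_ea] ->]; apply/cclassP.
by exists (e * p)%N; rewrite ?exprM // mulnC -modnMmr eq_ea modnMmr.
Qed.

Lemma gauss_period_frob a :
  gauss_period p f xi N g (p * a) = gauss_period p f xi N g a.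
Proof.
rewrite /gauss_period cclass_frob big_imset /=; last first.
  by move=> x y _ _; apply: frob_inj.
by apply: eq_bigr => x _; rewrite psi_frob.
Qed.

Lemma gauss_period_mulmod a :
  gauss_period p f xi N g (p * a %% N) = gauss_period p f xi N g a.
Proof.
rewrite /gauss_period cclass_modn -/(gauss_period _ _ _ _ _ _).
exact: gauss_period_frob.
Qed.

End GaussPeriods.

Unset Implicit Arguments.

Theorem lemma3p3 (F : finFieldType) (p f N : nat) (xi : algC) (g : F)
    (l : nat) (alpha : 'I_l -> algC) :
  prime p -> p \in [pchar F] -> #|F| = (p ^ f)%N ->
  (1 < N)%N -> (N %| #|F|.-1)%N ->
  p.-primitive_root xi ->
  (#|F|.-1).-primitive_root g ->
  injective alpha ->
  (forall a : 'I_N, exists i : 'I_l, gauss_period p f xi N g a = alpha i) ->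
  (forall i : 'I_l, exists a : 'I_N, gauss_period p f xi N g a = alpha i) ->
  let I := fun i : 'I_l => [set a : 'I_N | gauss_period p f xi N g a == alpha i] in
  (forall (i : 'I_l) (a b : 'I_N), (val b = (p * a) %% N)%N ->
      a \in I i -> b \in I i) /\
  ((2 <= m_gcd N p)%N ->
     exists! i0 : 'I_l,
       (#|I i0| = 1 %[mod m_gcd N p])%N /\
       (forall i : 'I_l, i != i0 -> (#|I i| = 0 %[mod m_gcd N p])%N)).
Proof.
move=> _ chF hF N_gt1 dvd_N_q1 _ g_prim alpha_inj cover _ I.
have N_gt0 : (0 < N)%N := ltnW N_gt1.
have co_pN : coprime p N := coprime_dvdr dvd_N_q1 (coprime_pred_card hF).
have I_mulmod i a : (mulmod p N_gt0 a \in I i) = (a \in I i).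
  by rewrite !inE /= gauss_period_mulmod.
split=> [i a b val_b | m_ge2].
  have -> : b = mulmod p N_gt0 a by apply: val_inj; rewrite val_b.
  by rewrite I_mulmod.
pose zero := Ordinal N_gt0; have [i0 eta0] := cover zero.
have card_I i : (#|I i| = (i0 == i) %[mod m_gcd N p])%N.
  have -> : (i0 == i) = (zero \in I i) by rewrite inE eta0 (inj_eq alpha_inj).
  apply: card_fclosed_mod (I_mulmod i) _ => [||x x_neq0].
  - exact: mulmod_inj.
  - by apply: val_inj; rewrite /= muln0 mod0n.
  - apply: m_gcd_dvd_order_mulmod => //; rewrite lt0n.
    by apply: contraNneq x_neq0 => x0; apply/eqP/val_inj.
exists i0; split=> [|j [card_j _]].
  by split=> [|i]; rewrite card_I ?eqxx // eq_sym => /negbTE ->.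
have := card_I j; rewrite card_j modn_small //.
by case: eqP => // _; rewrite mod0n.
Qed.
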